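(* Let $n=2k$ be a positive even integer. Let $f_1,f_2,f_3$ be three pairwise distinct bent Boolean functions on $\mathbb{F}_{2^n}$ such that $f_4:=f_1+f_2+f_3$ is also bent, and let $\sigma=f_1f_2+f_1f_3+f_2f_3$. Then: 1) $\sigma$ is bent if and only if $f_1^*+f_2^*+f_3^*+f_4^*=0$; and if $\sigma$ is bent, then $\sigma^*=f_1^*f_2^*+f_1^*f_3^*+f_2^*f_3^*$; 2) $\sigma$ is semi-bent if and only if $f_1^*+f_2^*+f_3^*+f_4^*=1$ (the constant function $1$); 3) otherwise (i.e. $f_1^*+f_2^*+f_3^*+f_4^*$ is not constant), $\{|W_\sigma(\lambda)| : \lambda\in\mathbb{F}_{2^n}\}=\{0,2^k,2^{k+1}\}$.
   Context: A Boolean function on $\mathbb{F}_{2^n}$ is a map $f:\mathbb{F}_{2^n}\to\mathbb{F}_2$. Its Walsh transform is $W_f(a)=\sum_{x\in\mathbb{F}_{2^n}}(-1)^{f(x)+\mathrm{Tr}^n_1(ax)}$, where $\mathrm{Tr}^n_1(x)=\sum_{i=0}^{n-1}x^{2^i}$. $f$ is bent if $|W_f(a)|=2^{n/2}$ for all $a$; then its dual $f^*$ is the Boolean function with $W_f(a)=2^{n/2}(-1)^{f^*(a)}$. For $n$ even, $f$ is semi-bent if $W_f$ takes values in $\{0,\pm 2^{n/2+1}\}$. Sums of Boolean functions are taken modulo 2. *)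

(* F_{2^n} is modelled by an arbitrary finite field F with #|F| = 2^n
   (any such field is isomorphic to F_{2^n}). Boolean functions are maps F -> bool,
   and addition of Boolean functions is xor, multiplication is &&. *)
From mathcomp Require Import all_boot all_order all_algebra.
Set Implicit Arguments. Unset Strict Implicit. Unset Printing Implicit Defensive.
Import Order.TTheory GRing.Theory Num.Theory.
Local Open Scope ring_scope.

Section Boolean.
Variable F : finFieldType.

Definition trace (n : nat) (x : F) : F := \sum_(i < n) x ^+ (2 ^ i).

Definition walsh (n : nat) (f : F -> bool) (a : F) : int :=
  \sum_(x : F) (-1) ^+ (f x (+) (trace n (a * x) == 1)).

Definition bent (n : nat) (f : F -> bool) : Prop :=
  forall a, `|walsh n f a|%N = (2 ^ n./2)%N.

(* dual: W_f(a) = 2^{n/2} (-1)^{f*(a)}, i.e. f*(a) = 1 iff W_f(a) < 0 (for bent f) *)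
Definition dual (n : nat) (f : F -> bool) (a : F) : bool := walsh n f a < 0.

Definition semibent (n : nat) (f : F -> bool) : Prop :=
  forall a, walsh n f a \in [:: 0; (2 ^ (n./2).+1)%:Z; - (2 ^ (n./2).+1)%:Z].
End Boolean.

(* Pointwise, 2 (-1)^sigma = (-1)^f1 + (-1)^f2 + (-1)^f3 - (-1)^f4, so by linearity of the
   Walsh transform W_sigma(l) = 2^(k-1) S(l) with
   S(l) = (-1)^f1*(l) + (-1)^f2*(l) + (-1)^f3*(l) - (-1)^f4*(l).
   If the four duals have even parity at l then S(l) = 2 (-1)^maj(f1*(l), f2*(l), f3*(l)),
   otherwise S(l) is one of 0, 4, -4; this gives 1) and 2).  Parseval's identity reads
   sum_l (S(l)^2 - 4) = 0, so as soon as one term is nonzero both S(l) = 0 and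
   |S(l)| = 4 occur, which gives 3). *)

From mathcomp Require Import all_boot all_order all_algebra all_field.
From mathcomp Require Import ring zify.
Import Order.TTheory GRing.Theory Num.Theory.
Set Implicit Arguments. Unset Strict Implicit. Unset Printing Implicit Defensive.
Local Open Scope ring_scope.

Section TraceCharacter.
Variables (F : finFieldType) (n : nat).
Hypothesis cardF : #|F| = (2 ^ n)%N.

Lemma pchar2_card : 2 \in [pchar F].
Proof. exact: card_finPcharP cardF _. Qed.

Lemma card_exp_gt0 : (0 < n)%N.
Proof. by rewrite lt0n; apply/eqP => n0; have := finNzRing_gt1 F; rewrite cardF n0. Qed.

Lemma exprD_pow2 (x y : F) i : (x + y) ^+ (2 ^ i) = x ^+ (2 ^ i) + y ^+ (2 ^ i).
Proof.
apply: exprDn_pchar; rewrite pnatX; apply/orP; left.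
by rewrite (eq_pnat _ (pcharf_eq pchar2_card)) pnat_id.
Qed.

Lemma traceD (x y : F) : trace n (x + y) = trace n x + trace n y.
Proof. by rewrite /trace -big_split; apply: eq_bigr => i _; apply: exprD_pow2. Qed.

Lemma trace0 : trace n (0 : F) = 0.
Proof. by rewrite /trace big1 // => i _; rewrite expr0n expn_eq0. Qed.

(* Squaring shifts the exponents 2^i to 2^(i+1), and x^(2^n) = x. *)
Lemma sqr_trace (x : F) : trace n x ^+ 2 = trace n x.
Proof.
rewrite /trace (big_morph (fun a : F => a ^+ 2) (fun a b => exprD_pow2 a b 1) (expr0n _ 2)).
under eq_bigr => i _ do rewrite -exprM -expnSr.
case: n card_exp_gt0 cardF => // m _ cardFm.
rewrite big_ord_recr big_ord_recl /= -cardFm expf_card expn0 expr1 addrC.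
by congr (_ + _); apply: eq_bigr => i _.
Qed.

Lemma trace_01 (x : F) : trace n x = 0 \/ trace n x = 1.
Proof.
have /eqP := sqr_trace x.
rewrite expr2 -subr_eq0 -[X in _ - X]mulr1 -mulrBr mulf_eq0 subr_eq0.
by case/orP => /eqP; [left | right].
Qed.

(* The trace is a nonzero polynomial of degree 2^(n-1) < #|F|, so it cannot vanish on F. *)
Lemma exists_trace1 : exists c : F, trace n c = 1.
Proof.
case: (pickP (fun c : F => trace n c == 1)) => [c /eqP trc|tr_neq1]; first by exists c.
have tr0 (c : F) : trace n c = 0 by case: (trace_01 c) => // tr1; move: (tr_neq1 c); rewrite tr1 eqxx.
case: n card_exp_gt0 cardF tr0 => // m _ cardFm tr0.
pose P : {poly F} := \sum_(i < m.+1) 'X^(2 ^ i).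
have P_coef1 : P`_1 = 1.
  rewrite coef_sum big_ord_recl coefXn /= big1 ?addr0 // => i _.
  by rewrite coefXn /bump /= add1n expnS; case: eqP => // h; have := expn_gt0 2 i; lia.
have P_neq0 : P != 0 by apply: contra_eq_neq P_coef1 => ->; rewrite coef0 eq_sym oner_eq0.
have P_size : (size P <= (2 ^ m).+1)%N.
  apply: (big_ind (fun p : {poly F} => (size p <= (2 ^ m).+1)%N)) => [|p q ? ?|i _].
  - by rewrite size_poly0.
  - by apply: leq_trans (size_polyD _ _) _; rewrite geq_max; apply/andP.
  - by rewrite size_polyXn ltnS leq_exp2l // -ltnS.
have all_roots : all (root P) (enum (pred_of_simpl predT)).
  apply/allP => c _; rewrite /root horner_sum.
  by under eq_bigr do rewrite hornerXn; rewrite -[\sum_(i < _) _]/(trace m.+1 c) tr0.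
have := max_poly_roots P_neq0 all_roots (enum_uniq _).
rewrite -cardE cardFm expnS => /leq_trans/(_ P_size); have := expn_gt0 2 m; lia.
Qed.

Definition tr_char (x : F) : int := (-1) ^+ (trace n x == 1).

Lemma tr_charD (x y : F) : tr_char (x + y) = tr_char x * tr_char y.
Proof.
rewrite /tr_char -signr_addb traceD.
have one_neq0 : (1 : F) != 0 := oner_neq0 F.
by case: (trace_01 x) => ->; case: (trace_01 y) => ->;
  rewrite ?addr0 ?add0r ?(addrr_pchar2 pchar2_card) ?eqxx //= ?(eq_sym 0) ?(negbTE one_neq0).
Qed.

Lemma sum_tr_char_mul (z : F) :
  \sum_a tr_char (a * z) = if z == 0 then (#|F|)%:Z else 0.
Proof.
have [->|z_neq0] := eqVneq z 0.
  under eq_bigr do rewrite mulr0 /tr_char trace0 eq_sym oner_eq0.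
  by rewrite sumr_const -natz.
rewrite -(reindex_inj (P := xpredT) (mulIf z_neq0)) /=.
have [c trc] := exists_trace1.
set S := \sum_i _; suff : S = - S by move/eqP; rewrite -subr_eq0 opprK -mulr2n mulrn_eq0 => /eqP.
rewrite {1}/S (reindex_inj (addIr c)) /= -sumrN; apply: eq_bigr => b _.
by rewrite tr_charD /tr_char trc eqxx expr1 mulrN1.
Qed.

Lemma walshE (f : F -> bool) a : walsh n f a = \sum_x (-1) ^+ f x * tr_char (a * x).
Proof. by apply: eq_bigr => x _; rewrite signr_addb. Qed.

Lemma parseval (f : F -> bool) : \sum_a walsh n f a ^+ 2 = (#|F| ^ 2)%N%:Z.
Proof.
have walsh_sqr a : walsh n f a ^+ 2 =
    \sum_x \sum_y ((-1) ^+ f x * (-1) ^+ f y) * tr_char (a * (x + y)).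
  rewrite expr2 walshE mulr_suml; apply: eq_bigr => x _.
  by rewrite mulr_sumr; apply: eq_bigr => y _; rewrite mulrDr tr_charD mulrACA.
rewrite (eq_bigr _ (fun a _ => walsh_sqr a)) exchange_big /=.
transitivity (\sum_(x : F) (#|F|)%:Z); last by rewrite sumr_const -natz -mulrnA natz mulnn.
apply: eq_bigr => x _; rewrite exchange_big /=.
under eq_bigr do rewrite -big_distrr /= sum_tr_char_mul.
rewrite (bigD1 x) //= big1 ?addr0 => [|y y_neq_x].
  by rewrite (addrr_pchar2 pchar2_card) eqxx -signr_addb addbb mul1r.
by rewrite addr_eq0 (oppr_pchar2 pchar2_card) eq_sym (negbTE y_neq_x) mulr0.
Qed.

End TraceCharacter.

Lemma sum_eq0_lt0_gt0 (R : realDomainType) (I : finType) (u : I -> R) i0 :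
  \sum_i u i = 0 -> u i0 != 0 -> (exists i, u i < 0) /\ (exists i, 0 < u i).
Proof.
move=> sum_u0 ui0_neq0.
have ex_sign (v : I -> R) : \sum_i v i = 0 -> v i0 != 0 -> exists i, v i < 0.
  move=> sum_v0 vi0_neq0; case: (pickP (fun i => v i < 0)) => [i ?|v_ge0]; first by exists i.
  case/eqP: vi0_neq0; apply: (psumr_eq0P _ sum_v0) => // i _.
  by rewrite leNgt v_ge0.
split; first exact: ex_sign.
have [i] : exists i, - u i < 0 by apply: ex_sign; rewrite ?sumrN ?sum_u0 ?oppr0 ?oppr_eq0.
by rewrite oppr_lt0; exists i.
Qed.

Definition majority (a b c : bool) : bool := (a && b) (+) (a && c) (+) (b && c).

Definition sign_comb (b1 b2 b3 b4 : bool) : int :=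
  (-1) ^+ b1 + (-1) ^+ b2 + (-1) ^+ b3 - (-1) ^+ b4.

Lemma sign_majority a b c : 2 * (-1) ^+ majority a b c = sign_comb a b c (a (+) b (+) c).
Proof. by case: a; case: b; case: c. Qed.

Section SignComb.
Variables b1 b2 b3 b4 : bool.
Local Notation s := (sign_comb b1 b2 b3 b4).
Local Notation parity := (b1 (+) b2 (+) b3 (+) b4).

Lemma sign_comb_lt0 : ~~ parity -> (s < 0) = majority b1 b2 b3.
Proof. by case: b1; case: b2; case: b3; case: b4. Qed.

Lemma abs_sign_comb : `|s|%N \in [:: 0; 2; 4]%N.
Proof. by case: b1; case: b2; case: b3; case: b4. Qed.

Lemma abs_sign_comb_eq2 : (`|s|%N == 2%N) = ~~ parity.
Proof. by case: b1; case: b2; case: b3; case: b4. Qed.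

Lemma sign_comb_mem_0_4 : (s \in [:: 0; 4; -4]) = parity.
Proof. by case: b1; case: b2; case: b3; case: b4. Qed.

Lemma sqr_sign_comb_eq4 : (s ^+ 2 == 4) = ~~ parity.
Proof. by case: b1; case: b2; case: b3; case: b4. Qed.

Lemma sqr_sign_comb_lt4 : (s ^+ 2 < 4) = (s == 0).
Proof. by case: b1; case: b2; case: b3; case: b4. Qed.

Lemma sqr_sign_comb_gt4 : (4 < s ^+ 2) = (`|s|%N == 4%N).
Proof. by case: b1; case: b2; case: b3; case: b4. Qed.

End SignComb.

Lemma walsh_majority (F : finFieldType) n (f1 f2 f3 : F -> bool) a :
  2 * walsh n (fun x => majority (f1 x) (f2 x) (f3 x)) a =
  walsh n f1 a + walsh n f2 a + walsh n f3 a - walsh n (fun x => f1 x (+) f2 x (+) f3 x) a.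
Proof.
rewrite /walsh mulr_sumr -!big_split -sumrB /=; apply: eq_bigr => x _.
rewrite [in LHS]signr_addb mulrA sign_majority /sign_comb !signr_addb.
by rewrite mulrBl !mulrDl.
Qed.

Lemma bent_walshE (F : finFieldType) n (f : F -> bool) a :
  bent n f -> walsh n f a = (2 ^ n./2)%:Z * (-1) ^+ dual n f a.
Proof. by move=> bent_f; rewrite {1}(intEsign (walsh n f a)) bent_f mulrC. Qed.

Section MajorityOfBentFunctions.
Variables (F : finFieldType) (k : nat) (f1 f2 f3 : F -> bool).
(* The k of this section is one less than the k of the theorem. *)
Hypothesis cardF : #|F| = (2 ^ k.+1.*2)%N.
Local Notation n := k.+1.*2.
Local Notation f4 := (fun x => f1 x (+) f2 x (+) f3 x).
Local Notation sigma := (fun x => majority (f1 x) (f2 x) (f3 x)).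
Hypotheses (bent_f1 : bent n f1) (bent_f2 : bent n f2) (bent_f3 : bent n f3).
Hypothesis bent_f4 : bent n f4.
Local Notation S a := (sign_comb (dual n f1 a) (dual n f2 a) (dual n f3 a) (dual n f4 a)).
Local Notation parity a := (dual n f1 a (+) dual n f2 a (+) dual n f3 a (+) dual n f4 a).

Lemma walsh_sigma a : walsh n sigma a = (2 ^ k)%:Z * S a.
Proof.
apply: (@mulfI _ 2) => //; rewrite walsh_majority !(bent_walshE a) // doubleK.
by rewrite /sign_comb expnS PoszM; ring.
Qed.

Lemma abs_walsh_sigma a : `|walsh n sigma a|%N = (2 ^ k * `|S a|)%N.
Proof. by rewrite walsh_sigma abszM. Qed.

Lemma bent_sigmaP : bent n sigma <-> forall a, parity a = false.
Proof.
rewrite /bent doubleK expnS; split=> [bent_sigma a | even a].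
  apply/negbTE; rewrite -abs_sign_comb_eq2 -(eqn_pmul2l (expn_gt0 2 k)).
  by rewrite -abs_walsh_sigma bent_sigma mulnC.
by rewrite abs_walsh_sigma mulnC; congr (_ * _)%N; apply/eqP; rewrite abs_sign_comb_eq2 even.
Qed.

Lemma dual_sigma a : parity a = false ->
  dual n sigma a = majority (dual n f1 a) (dual n f2 a) (dual n f3 a).
Proof.
by move=> even; rewrite /dual walsh_sigma pmulr_rlt0 ?ltz_nat ?expn_gt0 // sign_comb_lt0 ?even.
Qed.

Lemma semibent_sigmaP : semibent n sigma <-> forall a, parity a = true.
Proof.
have scale_inj : injective ( *%R (2 ^ k)%:Z) by apply: mulfI; rewrite eqz_nat expn_eq0.
rewrite /semibent.
have -> : [:: 0; (2 ^ (n./2).+1)%:Z; - (2 ^ (n./2).+1)%:Z] =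
    map ( *%R (2 ^ k)%:Z) [:: 0; 4; -4].
  by rewrite /= doubleK mulr0 mulrN !expnSr -mulnA PoszM.
split=> [semibent_sigma a | odd a].
  by rewrite -sign_comb_mem_0_4 -(mem_map scale_inj) -walsh_sigma semibent_sigma.
by rewrite walsh_sigma (mem_map scale_inj) sign_comb_mem_0_4 odd.
Qed.

Lemma sum_sqr_sign_comb : \sum_a (S a ^+ 2 - 4) = 0.
Proof.
have scale_neq0 : (2 ^ k)%:Z ^+ 2 != 0 by rewrite expf_eq0 eqz_nat expn_eq0.
have card_sqr : (#|F| ^ 2 = (2 ^ k) ^ 2 * (4 * #|F|))%N.
  by rewrite cardF -addnn expnD (expnS 2 k) -!mulnn; nia.
have : (2 ^ k)%:Z ^+ 2 * \sum_a S a ^+ 2 = (2 ^ k)%:Z ^+ 2 * (4 * #|F|%:Z).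
  rewrite mulr_sumr; under eq_bigr do rewrite -exprMn -walsh_sigma.
  by rewrite parseval // card_sqr -!natz !natrM natrX -expr2.
move/(mulfI scale_neq0); rewrite sumrB sumr_const => ->.
by rewrite -[#|F|%:Z]natz mulr_natr subrr.
Qed.

Lemma abs_walsh_sigma_mem a : `|walsh n sigma a|%N \in [:: 0; 2 ^ k.+1; 2 ^ k.+2]%N.
Proof.
move: (abs_sign_comb (dual n f1 a) (dual n f2 a) (dual n f3 a) (dual n f4 a)).
rewrite abs_walsh_sigma !inE !expnSr -mulnA.
by case/or3P => /eqP ->; rewrite ?muln0 ?eqxx ?orbT.
Qed.

Lemma abs_walsh_sigma_mixed : (exists a, parity a) -> (exists a, ~~ parity a) ->
  forall v, v \in [:: 0; 2 ^ k.+1; 2 ^ k.+2]%N -> exists a, `|walsh n sigma a|%N = v.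
Proof.
move=> [x odd_x] [y even_y] v.
have Sx_neq : S x ^+ 2 - 4 != 0 by rewrite subr_eq0 sqr_sign_comb_eq4 odd_x.
have [[a Sa_lt] [b Sb_gt]] := sum_eq0_lt0_gt0 sum_sqr_sign_comb Sx_neq.
rewrite !inE !expnSr -mulnA => /or3P [] /eqP ->.
- exists a; move: Sa_lt; rewrite subr_lt0 sqr_sign_comb_lt4 abs_walsh_sigma => /eqP ->.
  by rewrite muln0.
- by exists y; rewrite abs_walsh_sigma; move: even_y; rewrite -abs_sign_comb_eq2 => /eqP ->.
- by exists b; move: Sb_gt; rewrite subr_gt0 sqr_sign_comb_gt4 abs_walsh_sigma => /eqP ->.
Qed.

End MajorityOfBentFunctions.

Theorem theorem2 (F : finFieldType) (k : nat) (f1 f2 f3 : F -> bool) :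
  (0 < k)%N -> #|F| = (2 ^ k.*2)%N ->
  f1 <> f2 -> f1 <> f3 -> f2 <> f3 ->
  bent k.*2 f1 -> bent k.*2 f2 -> bent k.*2 f3 ->
  let f4 := fun x => f1 x (+) f2 x (+) f3 x in
  bent k.*2 f4 ->
  let sigma := fun x => (f1 x && f2 x) (+) (f1 x && f3 x) (+) (f2 x && f3 x) in
  let g := fun x => dual k.*2 f1 x (+) dual k.*2 f2 x (+) dual k.*2 f3 x (+) dual k.*2 f4 x in
  (* 1) *)
  ((bent k.*2 sigma <-> (forall x, g x = false)) /\
   (bent k.*2 sigma -> forall x,
      dual k.*2 sigma x =
        (dual k.*2 f1 x && dual k.*2 f2 x) (+) (dual k.*2 f1 x && dual k.*2 f3 x)
          (+) (dual k.*2 f2 x && dual k.*2 f3 x))) /\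
  (* 2) *)
  (semibent k.*2 sigma <-> (forall x, g x = true)) /\
  (* 3) *)
  ((exists x, g x) -> (exists y, ~~ g y) ->
     (forall l, `|walsh k.*2 sigma l|%N \in [:: 0%N; (2 ^ k)%N; (2 ^ k.+1)%N]) /\
     (forall v, v \in [:: 0%N; (2 ^ k)%N; (2 ^ k.+1)%N] ->
        exists l, `|walsh k.*2 sigma l|%N = v)).
Proof.
case: k => // k _ cardF _ _ _ bent1 bent2 bent3 f4 bent4 sigma g.
have bent_sigma := bent_sigmaP bent1 bent2 bent3 bent4.
split; [split | split].
- exact: bent_sigma.
- by move=> /bent_sigma even x; apply: dual_sigma.
- exact: semibent_sigmaP bent1 bent2 bent3 bent4.
- move=> odd even; split => [l | ]; first exact: abs_walsh_sigma_mem.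
  exact: abs_walsh_sigma_mixed cardF bent1 bent2 bent3 bent4 odd even.
Qed.
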